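(* Let $n\geqslant 2$ and let $\alpha\in\mathcal{PMI}_n\setminus\mathcal{POI}_n$ have rank $n-1$. Then: (1) if $n\equiv 0$ or $n\equiv 3 \pmod 4$, then $\alpha\in\mathcal{AM}_n$ if and only if $\mathrm{d}(\alpha)$ and $\mathrm{i}(\alpha)$ have distinct parities; (2) if $n\equiv 1$ or $n\equiv 2\pmod 4$, then $\alpha\in\mathcal{AM}_n$ if and only if $\mathrm{d}(\alpha)$ and $\mathrm{i}(\alpha)$ have the same parity.
   Context: Let $\Omega_n=\{1<2<\cdots<n\}$ and $\mathcal{I}_n$ the monoid of all partial injective maps of $\Omega_n$; the rank of $\alpha$ is $|\mathrm{Im}(\alpha)|$. $\mathcal{AI}_n$ is the set of all $\alpha\in\mathcal{I}_n$ with $\alpha=\sigma|_{\mathrm{Dom}(\alpha)}$ for some even permutation $\sigma$ of $\Omega_n$. $\mathcal{POI}_n$ is the set of order-preserving elements of $\mathcal{I}_n$; $\mathcal{PMI}_n$ is the set of monotone elements (order-preserving or order-reversing, where order-reversing means $x\leqslant y$ implies $x\alpha\geqslant y\alpha$ on the domain). $\mathcal{AM}_n=\mathcal{AI}_n\cap\mathcal{PMI}_n$. For $\alpha$ of rank $n-1$, $\mathrm{d}(\alpha)$ is the unique element of $\Omega_n\setminus\mathrm{Dom}(\alpha)$ and $\mathrm{i}(\alpha)$ is the unique element of $\Omega_n\setminus\mathrm{Im}(\alpha)$. *)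

(* Omega_n = {1 < ... < n} is modelled by 'I_n, with the
   ordinal k standing for the element k+1 of Omega_n (order is preserved). *)
From mathcomp Require Import all_boot all_order all_fingroup.
Set Implicit Arguments. Unset Strict Implicit. Unset Printing Implicit Defensive.

Definition ptrans (n : nat) := {ffun 'I_n -> option 'I_n}.

Definition pdom n (a : ptrans n) : {set 'I_n} := [set x | a x != None].
Definition pim n (a : ptrans n) : {set 'I_n} :=
  [set y | [exists x, a x == Some y]].
Definition prank n (a : ptrans n) : nat := #|pim a|.

Definition is_pinj n (a : ptrans n) : Prop :=
  forall x y z, a x = Some z -> a y = Some z -> x = y.

Definition order_preserving n (a : ptrans n) : Prop :=
  forall x y fx fy, a x = Some fx -> a y = Some fy ->
    (x <= y)%N -> (fx <= fy)%N.

Definition order_reversing n (a : ptrans n) : Prop :=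
  forall x y fx fy, a x = Some fx -> a y = Some fy ->
    (x <= y)%N -> (fy <= fx)%N.

Definition in_POI n (a : ptrans n) : Prop := is_pinj a /\ order_preserving a.
Definition in_PMI n (a : ptrans n) : Prop :=
  is_pinj a /\ (order_preserving a \/ order_reversing a).
Definition in_AI n (a : ptrans n) : Prop :=
  is_pinj a /\
  exists s : 'S_n, ~~ odd_perm s /\ forall x, x \in pdom a -> a x = Some (s x).
Definition in_AM n (a : ptrans n) : Prop := in_AI a /\ in_PMI a.

From mathcomp Require Import all_boot all_order all_fingroup.
From mathcomp Require Import zify.
Set Implicit Arguments. Unset Strict Implicit. Unset Printing Implicit Defensive.

(* A partial injection of rank n-1 is defined everywhere except at d and misses
   only i.  If it reverses order, the unique decreasing bijection between the two
   (n-1)-chains Omega_n \ {d} and Omega_n \ {i} is the reversal, so the only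
   permutation extending it is lift_perm d i (rev_perm n.-1).  Its sign is
   (-1)^(d+i) times the sign of the reversal of n-1 points, which is
   (-1)^C(n-1,2), and C(n-1,2) is odd exactly when n = 0 or 3 (mod 4). *)

Lemma odd_bin2 k : odd 'C(k, 2) = (2 <= k %% 4).
Proof.
elim: k => [|k IHk] //; rewrite binS bin1 oddD IHk.
rewrite -[k.+1]addn1 -modnDml -(odd_mod k (erefl false : odd 4 = false)).
by have := ltn_mod k 4; case: (k %% 4) => [|[|[|[|r]]]].
Qed.

Definition rev_perm n : 'S_n := perm (@rev_ord_inj n).

Lemma rev_permE n (x : 'I_n) : rev_perm n x = rev_ord x.
Proof. by rewrite permE. Qed.

Lemma rev_permS n : rev_perm n.+1 = lift_perm ord0 ord_max (rev_perm n).
Proof.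
apply/permP => x; case: (unliftP ord0 x) => [y|] ->.
  rewrite lift_perm_lift !rev_permE; apply/val_inj => /=.
  by rewrite /bump /=; have := ltn_ord y; lia.
by rewrite lift_perm_id rev_permE; apply/val_inj => /=; lia.
Qed.

Lemma odd_rev_perm n : odd_perm (rev_perm n) = odd 'C(n, 2).
Proof.
elim: n => [|n IHn].
  by rewrite (_ : rev_perm 0 = 1%g) ?odd_perm1 //; apply/permP => -[].
by rewrite rev_permS odd_lift_perm IHn binS bin1 oddD addbC.
Qed.

Lemma rev_ord_lt m (x y : 'I_m) : (rev_ord x < rev_ord y) = (y < x).
Proof. by have := ltn_ord x; have := ltn_ord y; rewrite /=; lia. Qed.

Lemma ord_increasing_ge m (h : 'I_m -> 'I_m) :
  {homo h : x y / x < y} -> forall x : 'I_m, x <= h x.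
Proof.
move=> h_incr [x]; elim: x => [//|x IHx] ltxm.
apply: leq_ltn_trans (IHx (ltnW ltxm)) _.
exact: h_incr (Ordinal (ltnW ltxm)) (Ordinal ltxm) (ltnSn x).
Qed.

Lemma ord_increasing_id m (h : 'I_m -> 'I_m) :
  {homo h : x y / x < y} -> h =1 id.
Proof.
move=> h_incr x; apply/val_inj/eqP; rewrite eqn_leq.
apply/andP; split; last exact: ord_increasing_ge.
(* Conjugating by the reversal turns [x <= h x] into [h x <= x]. *)
pose h' y := rev_ord (h (rev_ord y)).
have h'_incr : {homo h' : y z / y < z}.
  by move=> y z yz; rewrite /h' rev_ord_lt h_incr // rev_ord_lt.
have := ord_increasing_ge h'_incr (rev_ord x); rewrite /h' rev_ordK /=.
by have := ltn_ord x; have := ltn_ord (h x); lia.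
Qed.

Lemma ord_decreasing_rev m (g : 'I_m -> 'I_m) :
  {homo g : x y / x < y >-> y < x} -> g =1 @rev_ord m.
Proof.
move=> g_decr x; rewrite -[g x]rev_ordK; congr rev_ord.
apply: (ord_increasing_id (h := fun y => rev_ord (g y))) => y z yz.
by rewrite rev_ord_lt g_decr.
Qed.

Lemma eq_perm_off1 (T : finType) (s t : {perm T}) (d : T) :
  (forall x, x != d -> s x = t x) -> s = t.
Proof.
move=> st; apply/permP => x; have [->|] := eqVneq x d; last exact: st.
have [zd|zd] := eqVneq (s^-1 (t d))%g d; first by rewrite -{1}zd permKV.
by move: (st _ zd); rewrite permKV => /perm_inj zE; rewrite -zE eqxx in zd.
Qed.

Section PartialMap.

Variables (n : nat) (a : ptrans n).

Lemma prank_le_pdom : prank a <= #|pdom a|.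
Proof.
pose f x := odflt x (a x).
rewrite /prank; suff -> : pim a = f @: pdom a by exact: leq_imset_card.
apply/setP => y; rewrite inE; apply/existsP/imsetP => [[x /eqP ax]|[x]].
  by exists x; rewrite ?inE /f ax.
by rewrite inE /f; case ax: (a x) => [z|] // _ ->; exists x; rewrite ax.
Qed.

Lemma pdom_setC1 (d : 'I_n) :
  d \notin pdom a -> prank a = n.-1 -> pdom a = [set~ d].
Proof.
move=> d_notin rank_a; apply/eqP; rewrite eqEcard cardsC1 card_ord -rank_a.
rewrite prank_le_pdom andbT; apply/subsetP => x x_in; rewrite !inE.
by apply: contraNneq d_notin => <-.
Qed.

Lemma in_AI_setC1 (d : 'I_n) (s : 'S_n) :
  is_pinj a -> pdom a = [set~ d] -> {in pdom a, forall x, a x = Some (s x)} ->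
  in_AI a <-> ~~ odd_perm s.
Proof.
move=> a_inj dom_a a_s.
split=> [[_ [t [t_even a_t]]]|s_even]; last by split; last exists s.
suff -> : s = t by [].
apply: (eq_perm_off1 (d := d)) => x xd.
have x_in : x \in pdom a by rewrite dom_a !inE.
by move: (a_t x x_in); rewrite a_s // => -[].
Qed.

End PartialMap.

Section OrderReversingCorank1.

Variables (n : nat) (a : ptrans n.+1) (d i : 'I_n.+1).
Hypotheses (a_inj : is_pinj a) (a_decr : order_reversing a).
Hypotheses (dom_a : pdom a = [set~ d]) (i_notin : i \notin pim a).

(* a, read in the coordinates lift d and lift i of the complements of d and i;
   the default k is never used, since a (lift d k) is always some lift i _. *)
Definition core_map (k : 'I_n) : 'I_n := odflt k (obind (unlift i) (a (lift d k))).

Lemma a_liftE k : a (lift d k) = Some (lift i (core_map k)).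
Proof.
have : lift d k \in pdom a by rewrite dom_a !inE eq_sym neq_lift.
rewrite /core_map inE; case ak: (a (lift d k)) => [y|] //= _.
have : y != i.
  apply: contraNneq i_notin => <-; rewrite inE.
  by apply/existsP; exists (lift d k); rewrite ak.
by case: unliftP => [z|] -> //; rewrite eqxx.
Qed.

Lemma core_map_inj : injective core_map.
Proof.
move=> x y xy; apply: (@lift_inj _ d); apply: a_inj (a_liftE x) _.
by rewrite a_liftE xy.
Qed.

Lemma core_map_decreasing : {homo core_map : x y / x < y >-> y < x}.
Proof.
move=> x y xy; rewrite ltn_neqAle (inj_eq val_inj) (inj_eq core_map_inj).
rewrite neq_ltn xy orbT /= -(leq_bump2 i).
by apply: a_decr (a_liftE x) (a_liftE y) _; rewrite /= leq_bump2 ltnW.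
Qed.

Lemma lift_perm_rev_extends :
  {in pdom a, forall x, a x = Some (lift_perm d i (rev_perm n) x)}.
Proof.
move=> x; rewrite dom_a !inE; case: (unliftP d x) => [k ->|-> /eqP//] _.
by rewrite lift_perm_lift a_liftE rev_permE (ord_decreasing_rev core_map_decreasing).
Qed.

End OrderReversingCorank1.

Theorem proposition2p2 (n : nat) (a : ptrans n) (d i : 'I_n) :
  (2 <= n)%N ->
  in_PMI a -> ~ in_POI a ->
  prank a = n.-1 ->
  d \notin pdom a -> i \notin pim a ->
  ((n %% 4 = 0 \/ n %% 4 = 3)%N ->
     (in_AM a <-> odd (nat_of_ord d).+1 != odd (nat_of_ord i).+1)) /\
  ((n %% 4 = 1 \/ n %% 4 = 2)%N ->
     (in_AM a <-> odd (nat_of_ord d).+1 = odd (nat_of_ord i).+1)).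
Proof.
case: n a d i => [|n] a d i // n_ge2 a_PMI a_notPOI rank_a d_notin i_notin.
have [a_inj [a_incr|a_decr]] := a_PMI; first by case: a_notPOI.
have dom_a := pdom_setC1 d_notin rank_a.
have a_ext := lift_perm_rev_extends a_inj a_decr dom_a i_notin.
have AI_even := in_AI_setC1 a_inj dom_a a_ext.
have AM_even : in_AM a <-> ~~ odd_perm (lift_perm d i (rev_perm n)).
  by rewrite -AI_even; split=> [[]|].
rewrite odd_lift_perm odd_rev_perm odd_bin2 in AM_even.
split=> n_mod; rewrite AM_even /=.
- have -> : (2 <= n %% 4) = true by lia.
  by case: (odd d); case: (odd i); split.
- have -> : (2 <= n %% 4) = false by lia.
  by case: (odd d); case: (odd i); split.
Qed.
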